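(* Let $R$ be a commutative noetherian ring, let $\mathfrak a$ be an ideal of $R$ of positive height and let $\mathcal S$ be a Serre subcategory of $R$-modules. Then $(\mathcal N\mathcal S)_{\mathfrak a}\subseteq\mathcal S_{\mathfrak a}$. In particular, if $\mathcal N\mathcal S$ satisfies the condition $C_{\mathfrak a}$, then so does $\mathcal S$.
   Context: A Serre subcategory is closed under submodules, quotients and extensions. $\mathcal N$ is the subcategory of finitely generated modules; $\mathcal N\mathcal S$ is the class of modules $M$ with an exact sequence $0\to N\to M\to S\to0$, $N$ finitely generated, $S\in\mathcal S$. For a subcategory $\mathcal T$, $\mathcal T$ satisfies $C_{\mathfrak a}$ on a module $M$ if ($\Gamma_{\mathfrak a}(M)=M$ and $(0:_M\mathfrak a)\in\mathcal T$) implies $M\in\mathcal T$; $\mathcal T_{\mathfrak a}$ is the class of all modules on which $\mathcal T$ satisfies $C_{\mathfrak a}$; $\mathcal T$ satisfies $C_{\mathfrak a}$ if $\mathcal T_{\mathfrak a}$ is all $R$-modules. *)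

From HB Require Import structures.
From mathcomp Require Import all_boot all_order all_algebra.
Set Implicit Arguments. Unset Strict Implicit. Unset Printing Implicit Defensive.
Import GRing.Theory.
Local Open Scope ring_scope.

(* Commutative ring R (possibly the zero ring): comPzRingType.
   R-modules: lmodType R.  Ideals: predicates R -> Prop.
   A "subcategory" / class of R-modules: a predicate lmodType R -> Prop. *)

Section Defs.
Variable R : comPzRingType.

Definition is_ideal (I : R -> Prop) : Prop :=
  [/\ I 0, (forall x y, I x -> I y -> I (x + y)) & (forall r x, I x -> I (r * x))].

Definition is_proper_ideal (I : R -> Prop) : Prop := is_ideal I /\ ~ I 1.

Definition is_prime_ideal (P : R -> Prop) : Prop :=
  [/\ is_ideal P, ~ P 1 & forall x y, P (x * y) -> P x \/ P y].

Definition ideal_span (s : seq R) (x : R) : Prop :=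
  exists c : 'I_(size s) -> R, x = \sum_(i < size s) c i * s`_i.

Definition noetherian_ring : Prop :=
  forall I : R -> Prop, is_ideal I -> exists s : seq R, forall x, I x <-> ideal_span s x.

Definition subset_R (I J : R -> Prop) := forall x, I x -> J x.

Definition prime_height_ge (P : R -> Prop) (n : nat) : Prop :=
  exists C : nat -> (R -> Prop),
    [/\ forall i, (i <= n)%N -> is_prime_ideal (C i),
        forall x, C n x <-> P x &
        forall i, (i < n)%N -> subset_R (C i) (C i.+1) /\ ~ subset_R (C i.+1) (C i)].

(* ht(a) = inf { ht(P) | P prime, a <= P };  ht(a) >= n *)
Definition ideal_height_ge (a : R -> Prop) (n : nat) : Prop :=
  forall P, is_prime_ideal P -> subset_R a P -> prime_height_ge P n.

Definition fin_gen (M : lmodType R) : Prop :=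
  exists s : seq M, forall x : M,
    exists c : 'I_(size s) -> R, x = \sum_(i < size s) c i *: s`_i.

Definition short_exact (N M Q : lmodType R) (f : {linear N -> M}) (g : {linear M -> Q}) :=
  [/\ injective f, (forall q, exists m, g m = q) &
      forall m, g m = 0 <-> exists n, m = f n].

Definition serre (S : lmodType R -> Prop) : Prop :=
  [/\
      (forall (N M : lmodType R) (f : {linear N -> M}), injective f -> S M -> S N),
      (forall (M Q : lmodType R) (g : {linear M -> Q}), (forall q, exists m, g m = q) ->
          S M -> S Q) &
      (forall (N M Q : lmodType R) (f : {linear N -> M}) (g : {linear M -> Q}),
          short_exact f g -> S N -> S Q -> S M)].

Definition NS (S : lmodType R -> Prop) (M : lmodType R) : Prop :=
  exists (N Q : lmodType R) (f : {linear N -> M}) (g : {linear M -> Q}),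
    [/\ short_exact f g, fin_gen N & S Q].

(* a^n x = 0 : every product of n elements of a kills x (a^n is generated by these) *)
Definition killed_by_pow (a : R -> Prop) (n : nat) (M : lmodType R) (x : M) : Prop :=
  forall r : n.-tuple R, (forall i, a (tnth r i)) -> (\prod_(i < n) tnth r i) *: x = 0.

Definition a_torsion (a : R -> Prop) (M : lmodType R) : Prop :=
  forall x : M, exists n, killed_by_pow a n x.

(* (0 :_M a) belongs to T : some module of T is isomorphic (via an injective
   linear map into M) to the submodule {x in M | a x = 0} *)
Definition annihilator_in (T : lmodType R -> Prop) (a : R -> Prop) (M : lmodType R) : Prop :=
  exists (N : lmodType R) (f : {linear N -> M}),
    [/\ injective f,
        (forall x : M, (forall r, a r -> r *: x = 0) <-> exists y, x = f y) & T N].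

(* T satisfies C_a on M ; M in T_a *)
Definition C_on (T : lmodType R -> Prop) (a : R -> Prop) (M : lmodType R) : Prop :=
  a_torsion a M -> annihilator_in T a M -> T M.

Definition satisfies_C (T : lmodType R -> Prop) (a : R -> Prop) : Prop :=
  forall M : lmodType R, C_on T a M.

End Defs.

(* Let M be a-torsion with (0 :_M a) in S.  As S is contained in NS, the
   hypothesis on NS yields 0 -> N -> M -> Q -> 0 with N finitely generated and
   Q in S, so it suffices to show N in S.  Being finitely generated and
   a-torsion, N is killed by some a^n, and (0 :_N a) embeds in (0 :_M a), so it
   lies in S.  Now induct on n: if s_1, ..., s_k generate a, the map
   x |-> (s_i x)_i from N to N^k has kernel (0 :_N a), and its image I is
   killed by a^(n-1) with (0 :_I a) embedded in (0 :_N a)^k, which lies in S;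
   hence I lies in S, and so does the extension N. *)

From HB Require Import structures.
From mathcomp Require Import all_boot all_order all_algebra.
From mathcomp Require Import boolp.
Set Implicit Arguments. Unset Strict Implicit. Unset Printing Implicit Defensive.
Import GRing.Theory.
Local Open Scope ring_scope.

Section ImageSubmodule.
Variables (R : pzRingType) (U V : lmodType R) (f : {linear U -> V}).

Definition in_image (y : V) : Prop := exists x, y = f x.

Record image_submod := ImageSubmod { image_val : V; _ : `[< in_image image_val >] }.
HB.instance Definition _ := [isSub for image_val].
HB.instance Definition _ := [Choice of image_submod by <:].

Lemma in_image_submod_closed : subsemimod_closed (fun y => `[< in_image y >]).
Proof.
split; [split|] => [|y1 y2|c y]; rewrite ?inE.
- by apply/asboolP; exists 0; rewrite linear0.
- move=> /asboolP[x ->] /asboolP[y ->]; apply/asboolP.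
  by exists (x + y); rewrite linearD.
- by move=> /asboolP[x ->]; apply/asboolP; exists (c *: x); rewrite linearZ.
Qed.
HB.instance Definition _ :=
  GRing.SubChoice_isSubLmodule.Build _ _ _ image_submod in_image_submod_closed.

Definition corestr (x : U) : image_submod := ImageSubmod (asboolT (ex_intro _ x erefl)).

Lemma corestr_is_linear : linear corestr.
Proof. by move=> r x y; apply: val_inj; rewrite /= linearP. Qed.
HB.instance Definition _ :=
  GRing.isLinear.Build R U image_submod _ corestr corestr_is_linear.

Lemma corestrE x : val (corestr x) = f x. Proof. by []. Qed.

Lemma corestr_surj y : exists x, corestr x = y.
Proof. by case: y => y /[dup] /asboolP[x ey] iy; exists x; apply: val_inj. Qed.

End ImageSubmodule.

Section AnnihilatorSubmodule.
Variables (R : comPzRingType) (a : R -> Prop) (M : lmodType R).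

Definition annihilated (x : M) : Prop := forall r, a r -> r *: x = 0.

Record ann_submod := AnnSubmod { ann_val : M; _ : `[< annihilated ann_val >] }.
HB.instance Definition _ := [isSub for ann_val].
HB.instance Definition _ := [Choice of ann_submod by <:].

Lemma annihilated_submod_closed : subsemimod_closed (fun x => `[< annihilated x >]).
Proof.
split; [split|] => [|x y|c x]; rewrite ?inE.
- by apply/asboolP => r _; rewrite scaler0.
- move=> /asboolP hx /asboolP hy; apply/asboolP => r ar.
  by rewrite scalerDr hx // hy // addr0.
- move=> /asboolP hx; apply/asboolP => r ar.
  by rewrite scalerA mulrC -scalerA hx // scaler0.
Qed.
HB.instance Definition _ :=
  GRing.SubChoice_isSubLmodule.Build _ _ _ ann_submod annihilated_submod_closed.

Lemma ann_submodP (y : ann_submod) : annihilated (val y).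
Proof. exact/asboolP/(valP y). Qed.

Lemma annihilatedP (x : M) : annihilated x <-> exists y : ann_submod, x = val y.
Proof.
split=> [ax|[y ->]]; last exact: ann_submodP.
by exists (AnnSubmod (asboolT ax)).
Qed.

End AnnihilatorSubmodule.

Lemma ffun_ord0_inj (T X : Type) (f : {ffun 'I_0 -> T} -> X) : injective f.
Proof. by move=> F G _; apply/ffunP => -[]. Qed.

Section FfunMaps.
Variables (R : comPzRingType) (U V : lmodType R).

Definition map_ffun (I : finType) (f : {linear U -> V}) (F : {ffun I -> U}) :
  {ffun I -> V} := [ffun i => f (F i)].

Lemma map_ffun_is_linear I f : linear (@map_ffun I f).
Proof. by move=> r F G; apply/ffunP => i; rewrite !ffunE linearP. Qed.
HB.instance Definition _ I f :=
  GRing.isLinear.Build R _ _ _ (@map_ffun I f) (map_ffun_is_linear f).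

Lemma map_ffun_inj I (f : {linear U -> V}) :
  injective f -> injective (@map_ffun I f).
Proof.
move=> f_inj F G /ffunP eFG; apply/ffunP => i; apply: f_inj.
by have := eFG i; rewrite !ffunE.
Qed.

Variable k : nat.

Definition ffun_cons0 (x : U) : {ffun 'I_k.+1 -> U} :=
  [ffun i => if i == ord0 then x else 0].
Definition ffun_behead (F : {ffun 'I_k.+1 -> U}) : {ffun 'I_k -> U} :=
  [ffun i => F (lift ord0 i)].

Lemma ffun_cons0_is_linear : linear ffun_cons0.
Proof.
by move=> r x y; apply/ffunP => i; rewrite !ffunE; case: eqP; rewrite ?scaler0 ?addr0.
Qed.
HB.instance Definition _ :=
  GRing.isLinear.Build R _ _ _ ffun_cons0 ffun_cons0_is_linear.

Lemma ffun_behead_is_linear : linear ffun_behead.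
Proof. by move=> r F G; apply/ffunP => i; rewrite !ffunE. Qed.
HB.instance Definition _ :=
  GRing.isLinear.Build R _ _ _ ffun_behead ffun_behead_is_linear.

Lemma short_exact_ffun_cons0_behead : short_exact ffun_cons0 ffun_behead.
Proof.
have lift0_neq (i : 'I_k) : (lift ord0 i == ord0) = false.
  by rewrite eq_sym (negbTE (neq_lift _ _)).
split.
- by move=> x y /ffunP/(_ ord0); rewrite !ffunE eqxx.
- move=> F; exists [ffun i => if unlift ord0 i is Some j then F j else 0].
  by apply/ffunP => i; rewrite !ffunE liftK.
- move=> F; split=> [/ffunP F0|[x ->]]; last first.
    by apply/ffunP => i; rewrite !ffunE lift0_neq.
  exists (F ord0); apply/ffunP => i; rewrite ffunE.
  case: (unliftP ord0 i) => [j ->|->]; last by rewrite eqxx.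
  by rewrite lift0_neq; have := F0 j; rewrite !ffunE.
Qed.

End FfunMaps.

Section Annihilation.
Variables (R : comPzRingType) (a : R -> Prop).

Lemma killed_by_powS n (M : lmodType R) (x : M) :
  killed_by_pow a n x -> killed_by_pow a n.+1 x.
Proof.
move=> kx r ar; rewrite big_ord_recl -scalerA.
have -> : \prod_(i < n) tnth r (lift ord0 i) =
          \prod_(i < n) tnth [tuple tnth r (lift ord0 i) | i < n] i.
  by apply: eq_bigr => i _; rewrite tnth_mktuple.
by rewrite kx ?scaler0 // => i; rewrite tnth_mktuple.
Qed.

Lemma killed_by_pow_leq n m (M : lmodType R) (x : M) :
  (n <= m)%N -> killed_by_pow a n x -> killed_by_pow a m x.
Proof.
move=> /subnK <-; elim: (m - n)%N => [//|d IH] kx.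
by rewrite addSn; apply/killed_by_powS/IH.
Qed.

Lemma killed_by_powSZ n (M : lmodType R) (x : M) c :
  a c -> killed_by_pow a n.+1 x -> killed_by_pow a n (c *: x).
Proof.
move=> ac kx r ar; rewrite scalerA mulrC.
have := kx [tuple of c :: r]; rewrite big_ord_recl.
under eq_bigr => i _ do rewrite tnthS.
apply=> i; case: (unliftP ord0 i) => [j ->|->]; rewrite ?tnthS //.
Qed.

Lemma killed_by_pow_inj n (N M : lmodType R) (f : {linear N -> M}) x :
  injective f -> killed_by_pow a n (f x) -> killed_by_pow a n x.
Proof. by move=> f_inj kfx r ar; apply: f_inj; rewrite linearZ_LR kfx // linear0. Qed.

Lemma killed_by_pow_ffun n (I : finType) (M : lmodType R) (F : {ffun I -> M}) :
  (forall i, killed_by_pow a n (F i)) -> killed_by_pow a n F.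
Proof. by move=> kF r ar; apply/ffunP => i; rewrite !ffunE kF. Qed.

Lemma fin_gen_killed_by_pow (M : lmodType R) :
  fin_gen M -> (forall x : M, exists n, killed_by_pow a n x) ->
  exists n, forall x : M, killed_by_pow a n x.
Proof.
case=> g gen tors; have [e ke] := fin_all_exists (fun i : 'I_(size g) => tors g`_i).
exists (\max_i e i) => x r ar; have [c ->] := gen x.
rewrite scaler_sumr big1 // => i _; rewrite scalerA mulrC -scalerA.
by rewrite (killed_by_pow_leq (leq_bigmax i) (ke i)) // scaler0.
Qed.

Lemma annihilated_linear (N M : lmodType R) (f : {linear N -> M}) x :
  annihilated a x -> annihilated a (f x).
Proof. by move=> ax r ar; rewrite -linearZ ax // linear0. Qed.

Lemma annihilated_ffun (I : finType) (M : lmodType R) (F : {ffun I -> M}) i :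
  annihilated a F -> annihilated a (F i).
Proof.
move=> aF r ar; have := congr1 (fun G : {ffun I -> M} => G i) (aF r ar).
by rewrite !ffunE.
Qed.

End Annihilation.

Section SerreClass.
Variables (R : comPzRingType) (S : lmodType R -> Prop).
Hypothesis serreS : serre S.

Lemma serre_sub (N M : lmodType R) (f : {linear N -> M}) : injective f -> S M -> S N.
Proof. by case: serreS => sub _ _; apply: sub. Qed.

Lemma serre_quo (M Q : lmodType R) (g : {linear M -> Q}) :
  (forall q, exists m, g m = q) -> S M -> S Q.
Proof. by case: serreS => _ quo _; apply: quo. Qed.

Lemma serre_ext (N M Q : lmodType R) (f : {linear N -> M}) (g : {linear M -> Q}) :
  short_exact f g -> S N -> S Q -> S M.
Proof. by case: serreS => _ _ ext; apply: ext. Qed.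

Lemma serre_sub_factor (A T X : lmodType R)
    (k : {linear A -> X}) (t : {linear T -> X}) :
  injective k -> injective t -> (forall x, exists y, k x = t y) -> S T -> S A.
Proof.
move=> k_inj t_inj /choice[h kh] ST.
have h_lin : linear h by move=> r x y; apply: t_inj; rewrite linearP -!kh linearP.
pose hL := HB.pack_for {linear A -> T} h (GRing.isLinear.Build R A T _ h h_lin).
by apply: (serre_sub (f := hL)) ST => x y /(congr1 t); rewrite /= -!kh; apply: k_inj.
Qed.

Lemma serre_ffun k (T : lmodType R) : S T -> S {ffun 'I_k -> T}.
Proof.
move=> ST; elim: k => [|k IH].
  apply: (serre_sub (f := \0 : {linear {ffun 'I_0 -> T} -> T})) ST.
  exact: ffun_ord0_inj.
exact: serre_ext (short_exact_ffun_cons0_behead T k) ST IH.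
Qed.

End SerreClass.

Section ScaleByGenerators.
Variables (R : comPzRingType) (s : seq R) (M : lmodType R).

Definition scale_gens (x : M) : {ffun 'I_(size s) -> M} :=
  [ffun i : 'I_(size s) => s`_i *: x].

Lemma scale_gens_is_linear : linear scale_gens.
Proof. by move=> r x y; apply/ffunP => i; rewrite !ffunE scalerDr !scalerA mulrC. Qed.
HB.instance Definition _ :=
  GRing.isLinear.Build R _ _ _ scale_gens scale_gens_is_linear.

End ScaleByGenerators.

Arguments scale_gens {R} s M.

Section KilledByPowSerre.
Variables (R : comPzRingType) (a : R -> Prop) (S : lmodType R -> Prop).
Hypothesis serreS : serre S.
Variable s : seq R.
Hypothesis a_span : forall x, a x <-> ideal_span s x.

Lemma gen_in_ideal (i : 'I_(size s)) : a s`_i.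
Proof.
apply/a_span; exists (fun j => (j == i)%:R).
by rewrite (bigD1 i) //= eqxx mul1r big1 ?addr0 // => j /negbTE ->; rewrite mul0r.
Qed.

Lemma annihilated_gensP (M : lmodType R) (x : M) :
  annihilated a x <-> forall i : 'I_(size s), s`_i *: x = 0.
Proof.
split=> [ax i|sx r /a_span[c ->]]; first exact/ax/gen_in_ideal.
by rewrite scaler_suml big1 // => i _; rewrite -scalerA sx scaler0.
Qed.

Lemma short_exact_ann_scale_gens (M : lmodType R) :
  short_exact (val : ann_submod a M -> M) (corestr (scale_gens s M)).
Proof.
split; [exact: val_inj | exact: corestr_surj |] => x.
rewrite -annihilatedP annihilated_gensP.
split=> [/(congr1 val)/ffunP sx i | sx]; first by have := sx i; rewrite !ffunE.
by apply: val_inj; apply/ffunP => i; rewrite corestrE !ffunE sx.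
Qed.

Lemma killed_by_pow_image_scale_gens n (M : lmodType R) :
  (forall x : M, killed_by_pow a n.+1 x) ->
  forall y : image_submod (scale_gens s M), killed_by_pow a n y.
Proof.
move=> kM y; have [x <-] := corestr_surj y.
apply: (killed_by_pow_inj (f := val)); first exact: val_inj.
apply: killed_by_pow_ffun => i; rewrite ffunE.
exact/killed_by_powSZ/kM/gen_in_ideal.
Qed.

Lemma serre_ann_image_scale_gens (M : lmodType R) :
  S (ann_submod a M) -> S (ann_submod a (image_submod (scale_gens s M))).
Proof.
move=> SannM; have := serre_ffun serreS (size s) SannM.
apply: (serre_sub_factor serreS (k := val \o val)
          (t := @map_ffun _ _ _ 'I_(size s) val)).
- exact: inj_comp val_inj val_inj.
- exact/map_ffun_inj/val_inj.
move=> y; have ay := annihilated_linear val (ann_submodP y).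
have [z ez] :=
  fin_all_exists (fun i => proj1 (annihilatedP _ _) (annihilated_ffun i ay)).
by exists [ffun i => z i]; apply/ffunP => i; rewrite !ffunE /= ez.
Qed.

Lemma serre_of_killed_by_pow n (M : lmodType R) :
  (forall x : M, killed_by_pow a n x) -> S (ann_submod a M) -> S M.
Proof.
elim: n M => [|n IH] M kM SannM.
  apply: (serre_quo serreS (g := val)) SannM => x.
  have x0 : x = 0 by move: (kM x [tuple]); rewrite big_ord0 scale1r; apply; case.
  by exists 0; rewrite x0 linear0.
apply: (serre_ext serreS (short_exact_ann_scale_gens M) SannM).
exact/IH/serre_ann_image_scale_gens/SannM/killed_by_pow_image_scale_gens.
Qed.

End KilledByPowSerre.

Section ConditionC.
Variables (R : comPzRingType) (a : R -> Prop) (S : lmodType R -> Prop).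

Lemma NS_of_mem (M : lmodType R) : S M -> NS S M.
Proof.
exists {ffun 'I_0 -> M}, M, \0, idfun; split=> //.
- split=> [|m|m]; [exact: ffun_ord0_inj | by exists m |].
  by split=> [/= ->|[n ->]]; [exists 0 | ]; rewrite /= ?linear0.
- by exists [::] => F; exists (fun=> 0); rewrite big_ord0; apply/ffunP => -[].
Qed.

Lemma annihilator_in_NS (M : lmodType R) :
  annihilator_in S a M -> annihilator_in (NS S) a M.
Proof. by case=> N [f [f_inj f_img SN]]; exists N, f; split; last exact: NS_of_mem. Qed.

Lemma serre_ann_submod_of_inj (N M : lmodType R) (f : {linear N -> M}) :
  serre S -> injective f -> annihilator_in S a M -> S (ann_submod a N).
Proof.
move=> serreS f_inj [N0 [f0 [f0_inj f0_img SN0]]].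
apply: (serre_sub_factor serreS (k := f \o val) (t := f0)) SN0 => //.
  exact: inj_comp f_inj val_inj.
by move=> y; apply/f0_img/(annihilated_linear f)/ann_submodP.
Qed.

End ConditionC.

Theorem proposition3p6 (R : comPzRingType) (a : R -> Prop) (S : lmodType R -> Prop) :
  noetherian_ring R -> is_ideal a -> ideal_height_ge a 1 -> serre S ->
  (forall M : lmodType R, C_on (NS S) a M -> C_on S a M) /\
  (satisfies_C (NS S) a -> satisfies_C S a).
Proof.
move=> noeth a_ideal _ serreS; have [s a_span] := noeth a a_ideal.
have C_NS_C_S (M : lmodType R) : C_on (NS S) a M -> C_on S a M.
  move=> CM tors annS.
  have [N [Q [f [g [exact_fg fgN SQ]]]]] := CM tors (annihilator_in_NS annS).
  have [f_inj _ _] := exact_fg.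
  apply: (serre_ext serreS exact_fg _ SQ).
  have [n kN] : exists n, forall x : N, killed_by_pow a n x.
    apply: (fin_gen_killed_by_pow fgN) => x; have [n kfx] := tors (f x).
    by exists n; apply: killed_by_pow_inj kfx.
  have SannN := serre_ann_submod_of_inj serreS f_inj annS.
  exact: (serre_of_killed_by_pow serreS a_span kN SannN).
by split=> // CNS M; apply: C_NS_C_S.
Qed.
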